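(* Fix $a \geq 0$ and let $\mathfrak{g} = \mathfrak{r}'_{3,a}$, the three-dimensional Lie algebra with basis $\{e_1,e_2,e_3\}$ and nonzero brackets $[e_1,e_2]=ae_2-e_3$, $[e_1,e_3]=e_2+ae_3$. For every inner product $\langle\cdot,\cdot\rangle$ on $\mathfrak{g}$, there exist $\lambda \geq 1$, $k > 0$, and an orthonormal basis $\{x_1, x_2, x_3\}$ with respect to $k \langle\cdot,\cdot\rangle$ such that the bracket relations are given by \[ [x_1,x_2] = a x_2 - \lambda x_3 , \quad [x_1,x_3] = (1/\lambda) x_2 + a x_3 \] (and $[x_2,x_3]=0$). Furthermore, the matrix expression of the derivation algebra $\mathrm{Der}(\mathfrak{g})$ with respect to $\{x_1, x_2, x_3\}$ coincides with \[ \left\{ \begin{pmatrix} 0 & 0 & 0 \\ x_{21} & x_{22} & x_{23} \\ x_{31} & -\lambda^2 x_{23} & x_{22} \end{pmatrix} \;\middle|\; x_{21}, x_{22}, x_{23}, x_{31} \in \mathbb{R} \right\}. \] *)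

(* The real Lie algebra r'_{3,a} is modelled on 'rV[R]_3
   (R : realType), with standard basis e1,e2,e3 = rows delta_mx 0 i0/i1/i2. *)
From HB Require Import structures.
From mathcomp Require Import all_boot all_order all_algebra.
From mathcomp Require Import reals.
Set Implicit Arguments. Unset Strict Implicit. Unset Printing Implicit Defensive.
Import Order.TTheory GRing.Theory Num.Theory.
Local Open Scope ring_scope.

Definition i0 : 'I_3 := @Ordinal 3 0 isT.
Definition i1 : 'I_3 := @Ordinal 3 1 isT.
Definition i2 : 'I_3 := @Ordinal 3 2 isT.

Section R3a.
Variable R : realType.

Definition ebasis (i : 'I_3) : 'rV[R]_3 := delta_mx 0 i.

Definition r3a_br (a : R) (i j : 'I_3) : 'rV[R]_3 :=
  match nat_of_ord i, nat_of_ord j with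
  | 0, 1 => a *: ebasis i1 - ebasis i2
  | 1, 0 => - (a *: ebasis i1 - ebasis i2)
  | 0, 2 => ebasis i1 + a *: ebasis i2
  | 2, 0 => - (ebasis i1 + a *: ebasis i2)
  | _, _ => 0
  end.

Definition r3a_bracket (a : R) (u v : 'rV[R]_3) : 'rV[R]_3 :=
  \sum_(i < 3) \sum_(j < 3) (u 0 i * v 0 j) *: r3a_br a i j.

Definition is_inner_product (ip : 'rV[R]_3 -> 'rV[R]_3 -> R) : Prop :=
  (forall (c : R) u v w, ip (c *: u + v) w = c * ip u w + ip v w) /\
  (forall u v, ip u v = ip v u) /\
  (forall u, u != 0 -> 0 < ip u u).

Definition is_derivation (br : 'rV[R]_3 -> 'rV[R]_3 -> 'rV[R]_3)
  (D : 'rV[R]_3 -> 'rV[R]_3) : Prop :=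
  (forall (c : R) u v, D (c *: u + v) = c *: D u + D v) /\
  (forall u v, D (br u v) = br (D u) v + br u (D v)).

Definition der_mat (lam x21 x22 x23 x31 : R) : 'M[R]_3 :=
  \matrix_(i < 3, j < 3)
    match nat_of_ord i, nat_of_ord j with
    | 1, 0 => x21 | 1, 1 => x22 | 1, 2 => x23
    | 2, 0 => x31 | 2, 1 => - (lam ^+ 2 * x23) | 2, 2 => x22
    | _, _ => 0
    end.

End R3a.

From HB Require Import structures.
From mathcomp Require Import all_boot all_order all_algebra.
From mathcomp Require Import reals.
From mathcomp Require Import ring lra.
Import Order.TTheory GRing.Theory Num.Theory.
Set Implicit Arguments.
Unset Strict Implicit.
Unset Printing Implicit Defensive.
Local Open Scope ring_scope.

(* The derived algebra [g, g] = span(e2, e3) is abelian, and for every x with first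
   coordinate 1, ad x acts on it as a id + J, where J (0, q, r) = (0, r, -q) and J^2 = -1.
   Take x1 orthogonal to [g, g]. On [g, g] the quadratic form v |-> <v, J v> changes sign
   under J, so it has a zero v <> 0; exchanging v and J v if necessary, |v| <= |J v|.
   Then x2 = c v and x3 = -(c / lam) J v with lam = |J v| / |v| >= 1 are orthogonal, and
   c is chosen so that all three have the norm of x1. In the basis x the bracket has constant
   structure coefficients, so the derivations are computed once for that coordinate bracket
   and transported along the change of basis, which is invertible since x is orthonormal. *)

Lemma ord3P (j : 'I_3) : [\/ j = i0, j = i1 | j = i2].
Proof.
by case: j => [[|[|[|//]]] hj]; [constructor 1|constructor 2|constructor 3]; apply: val_inj.
Qed.

Lemma sum_ord3 (V : nmodType) (F : 'I_3 -> V) : \sum_(i < 3) F i = F i0 + F i1 + F i2.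
Proof. by rewrite !big_ord_recr big_ord0 /= add0r; congr (F _ + F _ + F _); apply: val_inj. Qed.

Section LinearMap.
Variables (R : pzRingType) (U V : lmodType R) (f : U -> V).
Hypothesis f_linear : forall c u v, f (c *: u + v) = c *: f u + f v.
Lemma linmap0 : f 0 = 0.
Proof.
have := f_linear 1 0 0; rewrite !scale1r addr0 => f00.
by apply: (addrI (f 0)); rewrite addr0 -f00.
Qed.
Lemma linmapD u v : f (u + v) = f u + f v.
Proof. by rewrite -[u in LHS]scale1r f_linear scale1r. Qed.
Lemma linmapZ c u : f (c *: u) = c *: f u.
Proof. by rewrite -[c *: u]addr0 f_linear linmap0 addr0. Qed.
Lemma linmap_sum I r (P : pred I) (F : I -> U) :
  f (\sum_(i <- r | P i) F i) = \sum_(i <- r | P i) f (F i).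
Proof. exact: (big_morph f linmapD linmap0). Qed.
End LinearMap.

Section AlternatingBilinear.
Variables (R : comNzRingType) (br : 'rV[R]_3 -> 'rV[R]_3 -> 'rV[R]_3).
Hypothesis br_linearl : forall c u v w, br (c *: u + v) w = c *: br u w + br v w.
Hypothesis br_linearr : forall c u v w, br w (c *: u + v) = c *: br w u + br w v.
Hypothesis br_alt : forall u, br u u = 0.

Lemma bracket_mulmx (X : 'M[R]_3) (u v : 'rV[R]_3) :
  br (u *m X) (v *m X) =
    (u 0 i0 * v 0 i1 - u 0 i1 * v 0 i0) *: br (row i0 X) (row i1 X)
  + (u 0 i0 * v 0 i2 - u 0 i2 * v 0 i0) *: br (row i0 X) (row i2 X)
  + (u 0 i1 * v 0 i2 - u 0 i2 * v 0 i1) *: br (row i1 X) (row i2 X).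
Proof.
have brDl w := linmapD (fun c u v => br_linearl c u v w).
have brZl w := linmapZ (fun c u v => br_linearl c u v w).
have brDr w := linmapD (fun c u v => br_linearr c u v w).
have brZr w := linmapZ (fun c u v => br_linearr c u v w).
have brC u1 w : br w u1 = - br u1 w.
  by have /eqP := br_alt (u1 + w); rewrite brDl !brDr !br_alt add0r addr0 addrC addr_eq0 => /eqP.
rewrite !mulmx_sum_row !sum_ord3 !(brDl, brDr, brZl, brZr) !br_alt
  (brC (row i0 X) (row i1 X)) (brC (row i0 X) (row i2 X)) (brC (row i1 X) (row i2 X)).
apply/rowP => j; rewrite !mxE; ring.
Qed.

End AlternatingBilinear.

Section OrthonormalFrame.
Variables (R : fieldType) (n : nat) (ip : 'rV[R]_n -> 'rV[R]_n -> R).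
Hypothesis ip_linearl : forall c u v w, ip (c *: u + v) w = c * ip u w + ip v w.

Lemma orthonormal_unitmx (k : R) (x : 'I_n -> 'rV[R]_n) :
  (forall i j, k * ip (x i) (x j) = (i == j)%:R) -> \matrix_i x i \in unitmx.
Proof.
move=> xON; rewrite -row_free_unit -kermx_eq0; apply/eqP/row_matrixP => r.
have /sub_kermxP := row_sub r (kermx (\matrix_i x i)); rewrite row0.
move: (row r _) => u uX0; apply/rowP => j; rewrite mxE.
have ip0 w : ip 0 w = 0 := @linmap0 _ _ R^o _ (fun c u v => ip_linearl c u v w).
have ipZ w c u1 : ip (c *: u1) w = c * ip u1 w :=
  @linmapZ _ _ R^o _ (fun c u v => ip_linearl c u v w) c u1.
have := congr1 (fun v => k * ip v (x j)) uX0; rewrite /= ip0 mulr0 mulmx_sum_row.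
rewrite (@linmap_sum _ _ R^o _ (fun c u v => ip_linearl c u v (x j))) mulr_sumr.
rewrite (bigD1 j) //= big1 => [|i /negPf ij]; last by rewrite rowK ipZ mulrCA xON ij mulr0.
by rewrite rowK ipZ mulrCA xON eqxx mulr1 addr0.
Qed.

End OrthonormalFrame.

Section Vec3.
Variable R : comNzRingType.

Definition vec3 (p q r : R) : 'rV[R]_3 := \row_(j < 3) nth 0 [:: p; q; r] j.

Lemma vec3_inj p q r p' q' r' :
  vec3 p q r = vec3 p' q' r' -> [/\ p = p', q = q' & r = r'].
Proof.
move=> e; have c j := congr1 (fun v : 'rV[R]_3 => v 0 j) e.
by split; [move: (c i0)|move: (c i1)|move: (c i2)]; rewrite !mxE.
Qed.

Lemma vec3_eq0 p q r : (vec3 p q r == 0) = [&& p == 0, q == 0 & r == 0].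
Proof.
have -> : 0 = vec3 0 0 0 by apply/rowP => j; rewrite !mxE; case: (ord3P j) => ->.
by apply/eqP/and3P => [/vec3_inj[-> -> ->] | [/eqP-> /eqP-> /eqP->]].
Qed.

End Vec3.

Ltac coord3 :=
  apply/rowP; let l := fresh "l" in move=> l; rewrite !mxE; case: (ord3P l) => -> /=.

Section ModelBracket.
Variable R : realType.

(* The bracket of r'_{3,a} in the coordinates of a basis satisfying the relations of the
   proposition with parameter [lam]; [lam = 1] gives the standard basis. *)
Definition r3a_lam_bracket (a lam : R) (u v : 'rV[R]_3) : 'rV[R]_3 :=
  let w01 := u 0 i0 * v 0 i1 - u 0 i1 * v 0 i0 in
  let w02 := u 0 i0 * v 0 i2 - u 0 i2 * v 0 i0 in
  vec3 0 (a * w01 + lam^-1 * w02) (- lam * w01 + a * w02).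

Lemma r3a_bracketE a u v : r3a_bracket a u v = r3a_lam_bracket a 1 u v.
Proof.
by rewrite /r3a_bracket !sum_ord3 /r3a_br /ebasis /=; coord3; field.
Qed.

Variables (a lam : R).
Local Notation br := (r3a_lam_bracket a lam).

Lemma r3a_lam_bracket_linearl c u v w : br (c *: u + v) w = c *: br u w + br v w.
Proof. by coord3; ring. Qed.

Lemma r3a_lam_bracket_linearr c u v w : br w (c *: u + v) = c *: br w u + br w v.
Proof. by coord3; ring. Qed.

Lemma r3a_lam_bracket_alt u : br u u = 0.
Proof. by coord3; ring. Qed.

Hypothesis lam_neq0 : lam != 0.

Lemma der_mat_derivation x21 x22 x23 x31 :
  is_derivation br (mulmx^~ (der_mat lam x21 x22 x23 x31)^T).
Proof.
split=> [c u v | u v]; first by rewrite mulmxDl scalemxAl.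
apply/rowP => l; rewrite !mxE !sum_ord3 !mxE /=.
by (case: (ord3P l) => -> /=); field.
Qed.

Lemma der_mat_equations (m00 m01 m02 m11 m12 m21 m22 : R) :
  lam^-1 * m01 = a * m02 -> a * m01 + lam * m02 = 0 ->
  lam * m22 = lam * (m00 + m11) -> lam^-1 * m11 = lam^-1 * (m00 + m22) ->
  lam^-1 * m21 + lam * m12 = - (a * m00) ->
  [/\ m00 = 0, m01 = 0, m02 = 0, m22 = m11 & m21 = - (lam ^+ 2 * m12)].
Proof.
move=> e1 e2 e3 e4 e5.
have laminv_neq0 : lam^-1 != 0 by rewrite invr_neq0.
have m02_0 : m02 = 0.
  apply: (mulfI (_ : lam * (1 + a ^+ 2) != 0)); last rewrite mulr0.
    by rewrite mulf_neq0 // gt_eqF // ltr_pwDl // sqr_ge0.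
  have -> : lam * (1 + a ^+ 2) * m02 = (a * m01 + lam * m02) - a * lam * (lam^-1 * m01 - a * m02).
    by field.
  by rewrite e2 e1 subrr mulr0 subr0.
have m01_0 : m01 = 0 by apply: (mulfI laminv_neq0); rewrite e1 m02_0 !mulr0.
have e3' := mulfI lam_neq0 e3; have e4' := mulfI laminv_neq0 e4.
have m00_0 : m00 = 0 by lra.
split=> //; first by lra.
apply: (mulfI laminv_neq0).
by rewrite -[lam^-1 * m21](addrK (lam * m12)) e5 m00_0; field.
Qed.

Lemma derivation_der_mat D (M : 'M[R]_3) :
  is_derivation br D -> (forall j, D (delta_mx 0 j) = delta_mx 0 j *m M^T) ->
  exists x21 x22 x23 x31, M = der_mat lam x21 x22 x23 x31.
Proof.
case=> D_lin D_leib hD.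
have De j : D (delta_mx 0 j) = vec3 (M i0 j) (M i1 j) (M i2 j).
  by rewrite hD -rowE; apply/rowP => l; rewrite !mxE; case: (ord3P l) => ->.
have DZ := linmapZ D_lin; have DD := linmapD D_lin.
have leib i j (l : 'I_3) :=
  congr1 (fun v : 'rV[R]_3 => v 0 l) (D_leib (delta_mx 0 i) (delta_mx 0 j)).
have b01 : br (delta_mx 0 i0) (delta_mx 0 i1) = a *: delta_mx 0 i1 + (- lam) *: delta_mx 0 i2.
  by coord3; ring.
have b02 : br (delta_mx 0 i0) (delta_mx 0 i2) = lam^-1 *: delta_mx 0 i1 + a *: delta_mx 0 i2.
  by coord3; ring.
have b12 : br (delta_mx 0 i1) (delta_mx 0 i2) = 0 *: delta_mx 0 i1 + 0 *: delta_mx 0 i2.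
  by coord3; ring.
have := leib i1 i2 i1; have := leib i1 i2 i2; have := leib i0 i1 i1.
have := leib i0 i1 i2; have := leib i0 i2 i1.
rewrite b01 b02 b12 !DD !DZ !De /r3a_lam_bracket !mxE /=.
rewrite !(mulr0, mul0r, mulr1, mul1r, oppr0, subr0, sub0r, addr0, add0r) => *.
have [m00_0 m01_0 m02_0 m22_m11 m21_E] : [/\ M i0 i0 = 0, M i0 i1 = 0, M i0 i2 = 0,
    M i2 i2 = M i1 i1 & M i2 i1 = - (lam ^+ 2 * M i1 i2)].
  by apply: der_mat_equations; lra.
exists (M i1 i0), (M i1 i1), (M i1 i2), (M i2 i0); apply/matrixP => i j; rewrite !mxE.
by case: (ord3P i) => ->; case: (ord3P j) => -> /=; rewrite ?m00_0 ?m01_0 ?m02_0 ?m22_m11 ?m21_E.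
Qed.

End ModelBracket.

Section FrameDerivations.
Variable R : realType.

Lemma derivation_transport (br1 br2 : 'rV[R]_3 -> 'rV[R]_3 -> 'rV[R]_3) (X : 'M[R]_3) D :
  X \in unitmx -> (forall u v, br2 (u *m X) (v *m X) = br1 u v *m X) ->
  is_derivation br2 D -> is_derivation br1 (fun u => D (u *m X) *m invmx X).
Proof.
move=> Xu brX [D_lin D_leib]; split=> [c u v | u v].
  by rewrite mulmxDl -scalemxAl D_lin mulmxDl scalemxAl.
rewrite -brX D_leib -[D (u *m X)](mulmxKV Xu) -[D (v *m X)](mulmxKV Xu) !brX.
by rewrite -mulmxDl !mulmxK.
Qed.

Definition r3a_frame (a lam : R) (x : 'I_3 -> 'rV[R]_3) :=
  [/\ r3a_bracket a (x i0) (x i1) = a *: x i1 - lam *: x i2,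
      r3a_bracket a (x i0) (x i2) = lam^-1 *: x i1 + a *: x i2 &
      r3a_bracket a (x i1) (x i2) = 0].

Variables (a lam : R) (x : 'I_3 -> 'rV[R]_3).
Hypothesis x_frame : r3a_frame a lam x.
Local Notation X := (\matrix_i x i).

Lemma r3a_bracket_frame u v :
  r3a_bracket a (u *m X) (v *m X) = r3a_lam_bracket a lam u v *m X.
Proof.
have [x01 x02 x12] := x_frame.
rewrite r3a_bracketE (bracket_mulmx (@r3a_lam_bracket_linearl _ a 1)
  (@r3a_lam_bracket_linearr _ a 1) (@r3a_lam_bracket_alt _ a 1)) !rowK -!r3a_bracketE x01 x02 x12.
rewrite mulmx_sum_row sum_ord3 !rowK /r3a_lam_bracket.
by apply/rowP => l; rewrite !mxE /=; ring.
Qed.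

Hypotheses (lam_neq0 : lam != 0) (Xu : X \in unitmx).

Lemma r3a_derivationsE (M : 'M[R]_3) :
  (exists D, is_derivation (r3a_bracket a) D /\
     forall j, D (x j) = \sum_(i < 3) M i j *: x i)
  <-> exists x21 x22 x23 x31, M = der_mat lam x21 x22 x23 x31.
Proof.
have xE j : x j = delta_mx 0 j *m X by rewrite -rowE rowK.
have MxE j : \sum_(i < 3) M i j *: x i = delta_mx 0 j *m M^T *m X.
  by rewrite mulmx_sum_row; apply: eq_bigr => i _; rewrite rowK -rowE !mxE.
split=> [[D [D_der Dx]] | [x21 [x22 [x23 [x31 ME]]]]].
  apply: (derivation_der_mat lam_neq0 (derivation_transport Xu r3a_bracket_frame D_der)) => j.
  by rewrite -xE Dx MxE mulmxK.
exists (fun v => v *m invmx X *m M^T *m X); split=> [|j].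
  have := derivation_transport (X := invmx X) _ _ (der_mat_derivation a lam_neq0 x21 x22 x23 x31).
  rewrite invmxK -ME; apply; first by rewrite unitmx_inv.
  move=> u v; apply: (canRL (mulmxK Xu)).
  by rewrite -r3a_bracket_frame !mulmxKV.
by rewrite MxE xE mulmxK.
Qed.

End FrameDerivations.

Lemma exists_zero_traceless_form (R : rcfType) (A B : R) :
  exists s t : R, 0 < s ^+ 2 + t ^+ 2 /\ A * (t ^+ 2 - s ^+ 2) + B * s * t = 0.
Proof.
have [-> | A_neq0] := eqVneq A 0.
  by exists 1, 0; split; [rewrite expr1n expr0n addr0 ltr01 | ring].
pose r := Num.sqrt (B ^+ 2 + 4 * A ^+ 2).
have r2 : r ^+ 2 = B ^+ 2 + 4 * A ^+ 2.
  by rewrite sqr_sqrtr // addr_ge0 ?sqr_ge0 // mulr_ge0 ?sqr_ge0.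
exists (2 * A), (r - B); split.
  have : 0 < A ^+ 2 by rewrite exprn_even_gt0.
  have := sqr_ge0 (r - B); nra.
have -> : A * ((r - B) ^+ 2 - (2 * A) ^+ 2) + B * (2 * A) * (r - B)
          = A * (r ^+ 2 - (B ^+ 2 + 4 * A ^+ 2)) by ring.
by rewrite r2 subrr mulr0.
Qed.

Section InnerProduct.
Variables (R : realType) (ip : 'rV[R]_3 -> 'rV[R]_3 -> R).
Hypotheses (ip_linearl : forall c u v w, ip (c *: u + v) w = c * ip u w + ip v w)
           (ip_sym : forall u v, ip u v = ip v u)
           (ip_pos : forall u, u != 0 -> 0 < ip u u).
Local Notation g i j := (ip (delta_mx 0 i) (delta_mx 0 j)).

Lemma ip_vec3 p q r p' q' r' :
  ip (vec3 p q r) (vec3 p' q' r') =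
    p * p' * g i0 i0 + (p * q' + q * p') * g i0 i1 + (p * r' + r * p') * g i0 i2
  + q * q' * g i1 i1 + (q * r' + r * q') * g i1 i2 + r * r' * g i2 i2.
Proof.
have ip0 w : ip 0 w = 0 := @linmap0 _ _ R^o _ (fun c u v => ip_linearl c u v w).
have vec3_comb p1 q1 r1 :
    vec3 p1 q1 r1 = p1 *: delta_mx 0 i0 + (q1 *: delta_mx 0 i1 + (r1 *: delta_mx 0 i2 + 0)).
  by coord3; ring.
rewrite vec3_comb !ip_linearl ip0 !(ip_sym (delta_mx 0 _) (vec3 _ _ _)).
rewrite vec3_comb !ip_linearl !ip0 (ip_sym (delta_mx 0 i1) (delta_mx 0 i0)).
by rewrite (ip_sym (delta_mx 0 i2) (delta_mx 0 i0)) (ip_sym (delta_mx 0 i2) (delta_mx 0 i1)); ring.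
Qed.

Let ip_vec3_gt0 p q r : [|| p != 0, q != 0 | r != 0] -> 0 < ip (vec3 p q r) (vec3 p q r).
Proof. by move=> pqr; apply: ip_pos; rewrite vec3_eq0 !negb_and. Qed.

Definition plane_gram_det := g i1 i1 * g i2 i2 - g i1 i2 ^+ 2.

Lemma plane_gram_det_gt0 : 0 < plane_gram_det.
Proof.
have g22_gt0 : 0 < g i2 i2.
  have -> : g i2 i2 = ip (vec3 0 0 1) (vec3 0 0 1) by rewrite ip_vec3; ring.
  by apply: ip_vec3_gt0; rewrite oner_neq0 !orbT.
rewrite -(pmulr_rgt0 _ g22_gt0).
have -> : g i2 i2 * plane_gram_det =
    ip (vec3 0 (g i2 i2) (- g i1 i2)) (vec3 0 (g i2 i2) (- g i1 i2)).
  by rewrite ip_vec3 /plane_gram_det; ring.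
by apply: ip_vec3_gt0; rewrite (gt_eqF g22_gt0) !orbT.
Qed.

(* e1 minus its orthogonal projection onto span(e2, e3), by Cramer's rule. *)
Definition e1_perp : 'rV[R]_3 :=
  vec3 1 ((g i0 i2 * g i1 i2 - g i0 i1 * g i2 i2) / plane_gram_det)
         ((g i0 i1 * g i1 i2 - g i0 i2 * g i1 i1) / plane_gram_det).

Lemma ip_e1_perp_plane q r : ip e1_perp (vec3 0 q r) = 0.
Proof.
rewrite /e1_perp.
have := plane_gram_det_gt0; rewrite lt0r /plane_gram_det => /andP[det_neq0 _].
by rewrite ip_vec3 /plane_gram_det; field.
Qed.

Lemma exists_orthogonal_rotated_pair :
  exists s t, [/\ 0 < s ^+ 2 + t ^+ 2,
    ip (vec3 0 s t) (vec3 0 t (- s)) = 0 &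
    ip (vec3 0 s t) (vec3 0 s t) <= ip (vec3 0 t (- s)) (vec3 0 t (- s))].
Proof.
have QE s t : ip (vec3 0 s t) (vec3 0 t (- s)) =
    g i1 i2 * (t ^+ 2 - s ^+ 2) + (g i1 i1 - g i2 i2) * s * t.
  by rewrite ip_vec3; ring.
have [s [t [st_gt0 Q0]]] := exists_zero_traceless_form (g i1 i2) (g i1 i1 - g i2 i2).
have [le_st | lt_ts] := lerP (ip (vec3 0 s t) (vec3 0 s t)) (ip (vec3 0 t (- s)) (vec3 0 t (- s))).
  by exists s, t; rewrite QE.
exists t, (- s); split; first by rewrite sqrrN addrC.
  by rewrite QE -[RHS]oppr0 -Q0; ring.
have -> : ip (vec3 0 (- s) (- t)) (vec3 0 (- s) (- t)) = ip (vec3 0 s t) (vec3 0 s t).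
  by rewrite !ip_vec3; ring.
by rewrite ltW.
Qed.

Lemma exists_r3a_orthonormal_frame (a : R) :
  exists (lam k : R) (x : 'I_3 -> 'rV[R]_3),
    [/\ 1 <= lam, 0 < k, (forall i j, k * ip (x i) (x j) = (i == j)%:R) &
       r3a_frame a lam x].
Proof.
have [s [t [st_gt0 Q0 N_le]]] := exists_orthogonal_rotated_pair.
pose m1 := ip (vec3 0 s t) (vec3 0 s t); pose m2 := ip (vec3 0 t (- s)) (vec3 0 t (- s)).
pose P := ip e1_perp e1_perp.
have m1_gt0 : 0 < m1.
  apply: ip_pos; rewrite vec3_eq0 eqxx /=; apply: contraTN st_gt0 => /andP[/eqP-> /eqP->].
  by rewrite expr0n addr0 ltxx.
have m2_gt0 : 0 < m2 := lt_le_trans m1_gt0 N_le.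
have P_gt0 : 0 < P by apply: ip_pos; rewrite vec3_eq0 oner_eq0.
pose lam := Num.sqrt (m2 / m1); pose c := Num.sqrt (P / m1).
have lam2 : lam ^+ 2 = m2 / m1 by rewrite sqr_sqrtr // divr_ge0 // ltW.
have c2 : c ^+ 2 = P / m1 by rewrite sqr_sqrtr // divr_ge0 // ltW.
have lam_ge1 : 1 <= lam.
  rewrite -sqrtr1 ler_sqrt; last by rewrite divr_ge0 // ltW.
  by rewrite ler_pdivlMr // mul1r.
have lam_neq0 : lam != 0 by rewrite gt_eqF // (lt_le_trans ltr01).
have [m1_neq0 m2_neq0 P_neq0] : [/\ m1 != 0, m2 != 0 & P != 0] by rewrite !gt_eqF.
pose x (i : 'I_3) := match nat_of_ord i with
  | 0 => e1_perp | 1 => vec3 0 (c * s) (c * t) | _ => vec3 0 (- (c * t) / lam) (c * s / lam) end.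
have x11 : ip (x i1) (x i1) = c ^+ 2 * m1 by rewrite /m1 !ip_vec3; ring.
have x22 : ip (x i2) (x i2) = (c / lam) ^+ 2 * m2 by rewrite /m2 !ip_vec3; field.
have x12 : ip (x i1) (x i2) = 0.
  by rewrite -[RHS](mulr0 (- (c ^+ 2 / lam))) -Q0 !ip_vec3; field.
exists lam, P^-1, x; split; rewrite ?invr_gt0 //.
- move=> i j; case: (ord3P i) => ->; case: (ord3P j) => ->;
    rewrite ?[ip _ (x i0)]ip_sym ?[ip (x i2) _]ip_sym ?ip_e1_perp_plane ?x12 ?mulr0 //.
  + by rewrite /= -/P (mulVf P_neq0).
  + by rewrite x11 c2 eqxx /=; field; rewrite m1_neq0 P_neq0.
  + by rewrite x22 expr_div_n c2 lam2 eqxx /=; field; rewrite ?m1_neq0 ?m2_neq0 ?P_neq0 ?lam_neq0.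
- by split; rewrite r3a_bracketE /r3a_lam_bracket /e1_perp; coord3; rewrite ?mulr0 ?subr0; field.
Qed.

End InnerProduct.

Unset Implicit Arguments.

Theorem proposition4p10 (R : realType) (a : R) (ha : 0 <= a)
  (ip : 'rV[R]_3 -> 'rV[R]_3 -> R) (hip : is_inner_product ip) :
  exists (lam k : R) (x : 'I_3 -> 'rV[R]_3),
    1 <= lam /\ 0 < k /\
    (forall i j, k * ip (x i) (x j) = (i == j)%:R) /\
    r3a_bracket a (x i0) (x i1) = a *: x i1 - lam *: x i2 /\
    r3a_bracket a (x i0) (x i2) = lam^-1 *: x i1 + a *: x i2 /\
    r3a_bracket a (x i1) (x i2) = 0 /\
    (forall M : 'M[R]_3,
      (exists D : 'rV[R]_3 -> 'rV[R]_3,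
         is_derivation (r3a_bracket a) D /\
         (forall j, D (x j) = \sum_(i < 3) M i j *: x i))
      <-> exists x21 x22 x23 x31 : R, M = der_mat lam x21 x22 x23 x31).
Proof.
have [ip_linearl [ip_sym ip_pos]] := hip.
have [lam [k [x [lam_ge1 k_gt0 x_on x_frame]]]] :=
  exists_r3a_orthonormal_frame ip_linearl ip_sym ip_pos a.
have lam_neq0 : lam != 0 by rewrite gt_eqF // (lt_le_trans ltr01).
have [x01 x02 x12] := x_frame.
exists lam, k, x; do 6 split => //.
exact: r3a_derivationsE x_frame lam_neq0 (orthonormal_unitmx ip_linearl x_on).
Qed.
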